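(* Let $n_1<n_2<n_3$ be positive integers with $\gcd(n_1,n_2,n_3)=1$ that minimally generate the numerical semigroup $S=\langle n_1,n_2,n_3\rangle$, and assume $S$ is not symmetric. Let $\delta_1=c_1-r_{12}-r_{13}$, $\delta_3=r_{31}+r_{32}-c_3$ and $g=\gcd(\delta_1,\delta_3)$. Then \[ \Delta(S)=\Big\{\, g\,i \;:\; i\in\{1,\ldots,\max\{\delta_1/g,\delta_3/g\}\},\ \text{the }\lambda\text{-B\'ezout couple of } i \text{ or the }\mu\text{-B\'ezout couple of } i \text{ for } (\delta_1/g,\delta_3/g) \text{ is irreducible}\Big\}. \]
   Context: $S=\langle n_1,n_2,n_3\rangle=\{x_1n_1+x_2n_2+x_3n_3 : x_i\in\mathbb N\}$; minimally generated means no $n_i$ lies in the submonoid generated by the other two. With $F=\max(\mathbb Z\setminus S)$, $S$ is symmetric if $x\in\mathbb Z\setminus S$ implies $F-x\in S$. For $\{i,j,k\}=\{1,2,3\}$, $c_i=\min\{c\in\mathbb Z^+ : cn_i\in\langle n_j,n_k\rangle\}$; when $S$ is not symmetric there are unique positive integers $r_{ij},r_{ik}$ with $c_in_i=r_{ij}n_j+r_{ik}n_k$ (and then $\delta_1,\delta_3$ are positive integers). For $s\in S$, the set of lengths is $\mathcal L(s)=\{x_1+x_2+x_3 : (x_1,x_2,x_3)\in\mathbb N^3,\ x_1n_1+x_2n_2+x_3n_3=s\}=\{m_1<\dots<m_k\}$, $\Delta(s)=\{m_t-m_{t-1}:2\le t\le k\}$, and $\Delta(S)=\bigcup_{s\in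 S}\Delta(s)$. B\'ezout couples: for coprime positive integers $p,q$ and $i\in\{1,\ldots,\max\{p,q\}\}$, the $\lambda$-B\'ezout couple of $i$ for $(p,q)$ is the unique $(x,y)\in\mathbb Z^2$ with $xp+yq=i$ and $0<y\le p$; the $\mu$-B\'ezout couple of $i$ for $(p,q)$ is the unique $(x,y)\in\mathbb Z^2$ with $xp+yq=i$ and $0<x\le q$. The $\lambda$-B\'ezout couple $\boldsymbol\lambda_i$ of $i$ is irreducible if there are no $j,k\in\{1,\ldots,\max\{p,q\}\}$ with $\boldsymbol\lambda_i=\boldsymbol\lambda_j+\boldsymbol\lambda_k$ (sum in $\mathbb Z^2$ of the $\lambda$-B\'ezout couples of $j$ and $k$); irreducibility of $\mu$-B\'ezout couples is defined in the same way using $\mu$-B\'ezout couples. *)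

From mathcomp Require Import all_boot all_order all_algebra.
Set Implicit Arguments. Unset Strict Implicit. Unset Printing Implicit Defensive.
Import Order.TTheory GRing.Theory Num.Theory.
Local Open Scope ring_scope.

Definition inS3 (n1 n2 n3 : nat) (s : int) : Prop :=
  exists x1 x2 x3 : nat, s = ((x1 * n1 + x2 * n2 + x3 * n3)%N)%:Z.

Definition inS2 (nj nk : nat) (s : nat) : Prop :=
  exists xj xk : nat, s = (xj * nj + xk * nk)%N.

Definition min_gen (n1 n2 n3 : nat) : Prop :=
  ~ inS2 n2 n3 n1 /\ ~ inS2 n1 n3 n2 /\ ~ inS2 n1 n2 n3.

Definition is_frobenius (n1 n2 n3 : nat) (F : int) : Prop :=
  ~ inS3 n1 n2 n3 F /\ forall x : int, F < x -> inS3 n1 n2 n3 x.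

Definition symmetric3 (n1 n2 n3 : nat) : Prop :=
  exists F : int, is_frobenius n1 n2 n3 F /\
    forall x : int, ~ inS3 n1 n2 n3 x -> inS3 n1 n2 n3 (F - x).

Definition is_c (ni nj nk c : nat) : Prop :=
  (0 < c)%N /\ inS2 nj nk (c * ni) /\
  forall c' : nat, (0 < c')%N -> (c' < c)%N -> ~ inS2 nj nk (c' * ni).

Definition is_length (n1 n2 n3 s m : nat) : Prop :=
  exists x1 x2 x3 : nat,
    (x1 * n1 + x2 * n2 + x3 * n3)%N = s /\ (x1 + x2 + x3)%N = m.

Definition in_Delta_s (n1 n2 n3 s d : nat) : Prop :=
  exists m m' : nat, is_length n1 n2 n3 s m /\ is_length n1 n2 n3 s m' /\
    (m < m')%N /\ d = (m' - m)%N /\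
    forall t : nat, (m < t)%N -> (t < m')%N -> ~ is_length n1 n2 n3 s t.

Definition in_Delta_S (n1 n2 n3 d : nat) : Prop :=
  exists s : nat, in_Delta_s n1 n2 n3 s d.

Definition lam_couple (p q i x y : int) : Prop :=
  x * p + y * q = i /\ 0 < y /\ y <= p.

Definition mu_couple (p q i x y : int) : Prop :=
  x * p + y * q = i /\ 0 < x /\ x <= q.

Definition in_range (p q i : int) : Prop := 1 <= i /\ i <= Num.max p q.

Definition irreducible_couple (cpl : int -> int -> int -> int -> int -> Prop)
    (p q i : int) : Prop :=
  exists x y : int, cpl p q i x y /\
    ~ (exists (j k xj yj xk yk : int),
         in_range p q j /\ in_range p q k /\
         cpl p q j xj yj /\ cpl p q k xk yk /\
         x = xj + xk /\ y = yj + yk).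

From mathcomp Require Import all_boot all_order all_algebra.
From mathcomp Require Import zify.
Import Order.TTheory GRing.Theory Num.Theory.
Local Open Scope ring_scope.

(* The relations (w1, w2, w3) in Z^3 with w1 n1 + w2 n2 + w3 n3 = 0 form the lattice spanned
   by v1 = (c1, -r12, -r13) and v3 = (-r31, -r32, c3), and adding a v1 + b v3 to a
   factorization changes its length by g (a p - b q).  Hence two consecutive lengths of an
   element differ by g i, where i is the gain of a feasible relation such that no relation
   of smaller positive gain is feasible.  Normalising such a relation modulo the gain-zero
   relation q v1 + p v3 shows that its coefficients form the lambda- or mu-Bezout couple of
   i, and a splitting of that couple would produce a feasible relation of smaller gain, so
   the couple is irreducible.  Conversely, starting from the factorization given by the
   negative parts of the relation of an irreducible couple, the minimality conditions on c1
   and c3 rule out every relation of smaller positive gain. *)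

Lemma is_lengthE (N1 N2 N3 s m : nat) : is_length N1 N2 N3 s m <->
  exists y1 y2 y3 : int, [/\ 0 <= y1, 0 <= y2, 0 <= y3,
    y1 * N1%:Z + y2 * N2%:Z + y3 * N3%:Z = s%:Z & y1 + y2 + y3 = m%:Z].
Proof.
split=> [[x1 [x2 [x3 [ex sx]]]] | [y1 [y2 [y3 [h1 h2 h3 ex sx]]]]].
  by exists x1%:Z, x2%:Z, x3%:Z; split; lia.
by exists (absz y1), (absz y2), (absz y3); lia.
Qed.

Lemma is_c_minz {ni nj nk c : nat} : is_c ni nj nk c -> forall k u v : int,
  0 < k -> k < c%:Z -> 0 <= u -> 0 <= v -> k * ni%:Z <> u * nj%:Z + v * nk%:Z.
Proof.
move=> [_ [_ cmin]] k u v hk hkc hu hv E.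
by apply: (cmin (absz k)); [lia | lia | exists (absz u), (absz v); lia].
Qed.

Lemma divz_gcdl_gt0 (m n : int) : 0 < m ->
  0 < gcdz m n /\ 0 < (m %/ gcdz m n)%Z /\ (m %/ gcdz m n)%Z * gcdz m n = m.
Proof.
move=> m_gt0; have Em := divzK (dvdz_gcdl m n).
have g_gt0 : 0 < gcdz m n.
  have g_ge0 : 0 <= gcdz m n by [].
  have : gcdz m n != 0 by rewrite gcdz_eq0 negb_and (gt_eqF m_gt0).
  lia.
split=> //; split=> //; rewrite ltNge; apply/negP => h.
have : (m %/ gcdz m n)%Z * gcdz m n <= 0 by nia.
lia.
Qed.

Section Relations.

Variables n1 n2 n3 c1 r12 r13 c3 r31 r32 g p q : int.
Hypothesis n1_gt0 : 0 < n1.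
Hypothesis n1_lt_n2 : n1 < n2.
Hypothesis n2_lt_n3 : n2 < n3.
Hypothesis c1_gt0 : 0 < c1.
Hypothesis c3_gt0 : 0 < c3.
Hypothesis r12_gt0 : 0 < r12.
Hypothesis r13_gt0 : 0 < r13.
Hypothesis r31_gt0 : 0 < r31.
Hypothesis r32_gt0 : 0 < r32.
Hypothesis c1_rel : c1 * n1 = r12 * n2 + r13 * n3.
Hypothesis c3_rel : c3 * n3 = r31 * n1 + r32 * n2.
Hypothesis c1_min : forall k u v : int,
  0 < k -> k < c1 -> 0 <= u -> 0 <= v -> k * n1 <> u * n2 + v * n3.
Hypothesis c3_min : forall k u v : int,
  0 < k -> k < c3 -> 0 <= u -> 0 <= v -> k * n3 <> u * n1 + v * n2.

Let n2_gt0 : 0 < n2. Proof. exact: lt_trans n1_gt0 n1_lt_n2. Qed.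
Let n3_gt0 : 0 < n3. Proof. exact: lt_trans n2_gt0 n2_lt_n3. Qed.

Definition rel1 (a b : int) : int := a * c1 - b * r31.
Definition rel2 (a b : int) : int := - (a * r12) - b * r32.
Definition rel3 (a b : int) : int := b * c3 - a * r13.

Lemma rel_dot a b : rel1 a b * n1 + rel2 a b * n2 + rel3 a b * n3 = 0.
Proof.
have := congr1 ( *%R a) c1_rel; have := congr1 ( *%R b) c3_rel.
rewrite /rel1 /rel2 /rel3 /=; lia.
Qed.

Lemma nonneg_relation_eq0 {x y z} : x * n1 + y * n2 + z * n3 = 0 ->
  0 <= x -> 0 <= y -> 0 <= z -> [/\ x = 0, y = 0 & z = 0].
Proof.
move=> E hx hy hz.
have := mulr_ge0 hx (ltW n1_gt0); have := mulr_ge0 hy (ltW n2_gt0).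
have := mulr_ge0 hz (ltW n3_gt0); move=> ? ? ?.
split; nia.
Qed.

Lemma r31_lt_c1 : r31 < c1.
Proof.
rewrite ltNge; apply/negP => h.
have p12 := mulr_gt0 r12_gt0 n2_gt0; have p32 := mulr_gt0 r32_gt0 n2_gt0.
have h1 : 0 <= (r31 - c1) * n1 by apply: mulr_ge0; lia.
have [h2|h2] : r13 < c3 \/ c3 <= r13 by lia.
  by apply: (c3_min (c3 - r13) (r31 - c1) (r12 + r32)); lia.
have h3 : 0 <= (r13 - c3) * n3 by apply: mulr_ge0; lia.
lia.
Qed.

Lemma r13_lt_c3 : r13 < c3.
Proof.
rewrite ltNge; apply/negP => h.
have p12 := mulr_gt0 r12_gt0 n2_gt0; have p32 := mulr_gt0 r32_gt0 n2_gt0.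
have h1 : 0 <= (r13 - c3) * n3 by apply: mulr_ge0; lia.
have [h2|h2] : r31 < c1 \/ c1 <= r31 by lia.
  by apply: (c1_min (c1 - r31) (r12 + r32) (r13 - c3)); lia.
have h3 : 0 <= (r31 - c1) * n1 by apply: mulr_ge0; lia.
lia.
Qed.

(* The rectangle [0, c1) x [0, c3) with its corner [c1 - r31, c1) x [c3 - r13, c3)
   removed: a fundamental domain for the projection of the lattice of relations
   onto the (x1, x3)-plane. *)
Definition in_box (x1 x3 : int) : Prop :=
  0 <= x1 /\ x1 < c1 /\ 0 <= x3 /\ x3 < c3 /\ (x1 < c1 - r31 \/ x3 < c3 - r13).

Lemma box_not_multiple_n2 {x1 x3 k} :
  in_box x1 x3 -> 0 < k -> x1 * n1 + x3 * n3 <> k * n2.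
Proof.
move=> [h1 [h2 [h3 [h4 hD]]]] hk E.
have r31c := r31_lt_c1; have r13c := r13_lt_c3.
have [hk1|hk1] : r12 <= k \/ k < r12 by lia.
  have hx3 : c3 - r13 <= x3.
    rewrite leNgt; apply/negP => hh.
    by apply: (c3_min (x3 + r13) (c1 - x1) (k - r12)); lia.
  have hx1 : x1 < c1 - r31 by lia.
  have [hk2|hk2] : r12 + r32 <= k \/ k < r12 + r32 by lia.
    have P1 := mulr_gt0 (_ : 0 < c1 - x1 - r31) n1_gt0.
    have P2 := mulr_ge0 (_ : 0 <= k - r12 - r32) (ltW n2_gt0).
    have Eq : (x3 - c3 + r13) * n3 = (c1 - x1 - r31) * n1 + (k - r12 - r32) * n2.
      by lia.
    have hpos : 0 < x3 - c3 + r13 by rewrite -(pmulr_lgt0 _ n3_gt0) Eq; lia.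
    by apply: (c3_min (x3 - c3 + r13) (c1 - x1 - r31) (k - r12 - r32)); lia.
  by apply: (c1_min (c1 - r31 - x1) (r12 + r32 - k) (x3 - c3 + r13)); lia.
have [hk3|hk3] : r32 <= k \/ k < r32 by lia.
  have hx1 : c1 - r31 <= x1.
    rewrite leNgt; apply/negP => hh.
    by apply: (c1_min (x1 + r31) (k - r32) (c3 - x3)); lia.
  by apply: (c3_min (c3 - r13 - x3) (x1 - c1 + r31) (r12 + r32 - k)); lia.
have [hx1|hx1] : x1 = 0 \/ 0 < x1 by lia.
  have [hx3|hx3] : x3 = 0 \/ 0 < x3 by lia.
    by have := mulr_gt0 hk n2_gt0; lia.
  by apply: (c3_min (c3 - x3) (x1 + r31) (r32 - k)); lia.
by apply: (c1_min (c1 - x1) (r12 - k) (x3 + r13)); lia.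
Qed.

Lemma box_reduce_nonneg u1 u3 : 0 <= u1 -> 0 <= u3 < c3 ->
  exists a b, in_box (u1 - rel1 a b) (u3 - rel3 a b).
Proof.
suff box_N (N : nat) : forall u1 u3, 0 <= u1 <= N%:Z -> 0 <= u3 < c3 ->
    exists a b, in_box (u1 - rel1 a b) (u3 - rel3 a b).
  by move=> hu1 hu3; apply: (box_N (absz u1)) => //; lia.
have r31c := r31_lt_c1; have r13c := r13_lt_c3.
elim: N => [|N IH] {}u1 {}u3 hu1 hu3.
  by exists 0, 0; rewrite /in_box /rel1 /rel3; lia.
have [hD|hD] : in_box u1 u3 \/ ~ in_box u1 u3 by rewrite /in_box; lia.
  by exists 0, 0; move: hD; rewrite /in_box /rel1 /rel3; lia.
move: hD; rewrite /in_box => hD.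
have [hh|hh] : u3 < c3 - r13 \/ c3 - r13 <= u3 by lia.
  have [a [b hab]] := IH (u1 - c1) (u3 + r13) (ltac:(lia)) (ltac:(lia)).
  by exists (a + 1), b; move: hab; rewrite /in_box /rel1 /rel3; lia.
have [a [b hab]] :=
  IH (u1 - (c1 - r31)) (u3 - (c3 - r13)) (ltac:(lia)) (ltac:(lia)).
by exists (a + 1), (b + 1); move: hab; rewrite /in_box /rel1 /rel3; lia.
Qed.

Lemma box_reduce u1 u3 : exists a b, in_box (u1 - rel1 a b) (u3 - rel3 a b).
Proof.
suff box_N (N : nat) : forall u1 u3, - N%:Z <= u1 -> 0 <= u3 < c3 ->
    exists a b, in_box (u1 - rel1 a b) (u3 - rel3 a b).
  have := divz_eq u3 c3; have := modz_ge0 u3 (lt0r_neq0 c3_gt0).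
  have := ltz_pmod u3 c3_gt0.
  set t := (u3 %/ c3)%Z; set m := (u3 %% c3)%Z => hm2 hm1 E.
  have [a [b hab]] := box_N (absz (u1 + t * r31)) (u1 + t * r31) m (ltac:(lia)) (ltac:(lia)).
  by exists a, (b + t); move: hab; rewrite /in_box /rel1 /rel3; lia.
have r31c := r31_lt_c1; have r13c := r13_lt_c3.
elim: N => [|N IH] {}u1 {}u3 hu1 hu3.
  by apply: box_reduce_nonneg; lia.
have [hD|hD] : 0 <= u1 \/ u1 < 0 by lia.
  by apply: box_reduce_nonneg; lia.
have [hh|hh] : r13 <= u3 \/ u3 < r13 by lia.
  have [a [b hab]] := IH (u1 + c1) (u3 - r13) (ltac:(lia)) (ltac:(lia)).
  by exists (a - 1), b; move: hab; rewrite /in_box /rel1 /rel3; lia.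
have [a [b hab]] :=
  IH (u1 + (c1 - r31)) (u3 + (c3 - r13)) (ltac:(lia)) (ltac:(lia)).
by exists (a - 1), (b - 1); move: hab; rewrite /in_box /rel1 /rel3; lia.
Qed.

Lemma relation_lattice w1 w2 w3 : w1 * n1 + w2 * n2 + w3 * n3 = 0 ->
  exists a b, [/\ w1 = rel1 a b, w2 = rel2 a b & w3 = rel3 a b].
Proof.
move=> hw; have [a [b hbox]] := box_reduce w1 w3.
exists a, b.
have := rel_dot a b.
move: hbox; set x1 := w1 - rel1 a b; set x3 := w3 - rel3 a b => hbox hd.
set e := w2 - rel2 a b.
have E : x1 * n1 + x3 * n3 = (- e) * n2 by rewrite /x1 /x3 /e; lia.
have [he|he] : 0 < - e \/ 0 <= e by lia.
  by case: (box_not_multiple_n2 hbox he E).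
case: hbox => h1 [_ [h3 _]].
have E0 : x1 * n1 + e * n2 + x3 * n3 = 0 by lia.
have [hx1 he0 hx3] := nonneg_relation_eq0 E0 h1 he h3.
by split; move: hx1 he0 hx3; rewrite /x1 /x3 /e; lia.
Qed.

Hypothesis g_gt0 : 0 < g.
Hypothesis p_gt0 : 0 < p.
Hypothesis q_gt0 : 0 < q.
Hypothesis delta1_eq : c1 - r12 - r13 = g * p.
Hypothesis delta3_eq : r31 + r32 - c3 = g * q.

Definition gain (a b : int) : int := a * p - b * q.

(* (alpha, - beta, gamma) is the relation [rel1 q p, rel2 q p, rel3 q p] of gain 0. *)
Definition alpha : int := q * c1 - p * r31.
Definition beta : int := q * r12 + p * r32.
Definition gamma : int := p * c3 - q * r13.

Definition feasible (y1 y2 y3 a b : int) : Prop :=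
  0 <= y1 + rel1 a b /\ 0 <= y2 + rel2 a b /\ 0 <= y3 + rel3 a b.

Ltac unfold_rel := unfold feasible, rel1, rel2, rel3, gain, beta, alpha, gamma in *.

Lemma rel_length a b : rel1 a b + rel2 a b + rel3 a b = g * gain a b.
Proof.
have := congr1 ( *%R a) delta1_eq; have := congr1 ( *%R b) delta3_eq.
rewrite /=; unfold_rel; lia.
Qed.

Lemma shift_dot y1 y2 y3 a b :
  (y1 + rel1 a b) * n1 + (y2 + rel2 a b) * n2 + (y3 + rel3 a b) * n3
  = y1 * n1 + y2 * n2 + y3 * n3.
Proof. by have := rel_dot a b; lia. Qed.

Lemma shift_length y1 y2 y3 a b :
  (y1 + rel1 a b) + (y2 + rel2 a b) + (y3 + rel3 a b) = y1 + y2 + y3 + g * gain a b.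
Proof. by have := rel_length a b; lia. Qed.

Lemma beta_gt0 : 0 < beta.
Proof. by have := mulr_gt0 q_gt0 r12_gt0; have := mulr_gt0 p_gt0 r32_gt0; rewrite /beta; lia. Qed.

Lemma alpha_gamma_gt0 : 0 < alpha /\ 0 < gamma.
Proof.
have D := rel_dot q p; have L := rel_length q p.
have hb := beta_gt0.
have ph : gain q p = 0 by rewrite /gain; lia.
rewrite ph mulr0 in L.
have [hX|hX] : alpha <= 0 \/ 0 < alpha by lia.
  have hZ : 0 < gamma by move: L hb hX; unfold_rel; lia.
  have := mulr_gt0 hZ (_ : 0 < n3 - n2).
  have := mulr_ge0 (_ : 0 <= - alpha) (_ : 0 <= n2 - n1).
  move: D L hX hZ; unfold_rel; lia.
have [hZ|//] : gamma <= 0 \/ 0 < gamma by lia.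
have := mulr_gt0 hX (_ : 0 < n2 - n1).
have := mulr_ge0 (_ : 0 <= - gamma) (_ : 0 <= n3 - n2).
move: D L hX hZ; unfold_rel; lia.
Qed.

Let alpha_gt0 : 0 < alpha. Proof. by case: alpha_gamma_gt0. Qed.
Let gamma_gt0 : 0 < gamma. Proof. by case: alpha_gamma_gt0. Qed.

Lemma gain_lt0_of_rel1_le0 {a b} : 0 <= a -> 0 < b -> rel1 a b <= 0 -> gain a b < 0.
Proof.
move=> ha hb h.
have h1 := mulr_ge0 (_ : 0 <= - rel1 a b) (ltW p_gt0).
have h2 := mulr_gt0 hb alpha_gt0.
have : c1 * gain a b < 0 by move: h1 h2; unfold_rel; lia.
by rewrite (pmulr_rlt0 _ c1_gt0).
Qed.

Lemma gain_lt0_of_rel3_ge0 {a b} : a < 0 -> 0 <= rel3 a b -> gain a b < 0.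
Proof.
move=> ha h.
have h1 := mulr_ge0 h (ltW q_gt0).
have h2 := mulr_gt0 (_ : 0 < - a) gamma_gt0.
have : c3 * gain a b < 0 by move: h1 h2; unfold_rel; lia.
by rewrite (pmulr_rlt0 _ c3_gt0).
Qed.

Lemma c1_le_rel1 {a b} : 0 < rel1 a b -> rel2 a b <= 0 -> rel3 a b <= 0 -> c1 <= rel1 a b.
Proof.
move=> h1 h2 h3; rewrite leNgt; apply/negP => h.
have D := rel_dot a b.
by apply: (c1_min (rel1 a b) (- rel2 a b) (- rel3 a b)); lia.
Qed.

Lemma rel3_le_Nc3 {a b} : rel3 a b < 0 -> 0 <= rel1 a b -> 0 <= rel2 a b -> rel3 a b <= - c3.
Proof.
move=> h1 h2 h3; rewrite leNgt; apply/negP => h.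
have D := rel_dot a b.
by apply: (c3_min (- rel3 a b) (rel1 a b) (rel2 a b)); lia.
Qed.

Lemma gain_descent {y1 y2 y3 a b} : 0 <= y1 -> 0 <= y2 -> 0 <= y3 ->
  feasible y1 y2 y3 a b ->
  p < gain a b -> q < gain a b ->
  exists a' b', feasible y1 y2 y3 a' b' /\ 0 < gain a' b' /\ gain a' b' < gain a b.
Proof.
move=> h1 h2 h3 hv hp' hq'.
have [ha|ha] : 1 <= a \/ a <= 0 by lia.
  exists (a - 1), b.
  have hv1 : 0 <= y1 + rel1 (a - 1) b.
    rewrite leNgt; apply/negP => hh.
    have hb : 0 < b.
      have [//|hb] : 0 < b \/ b <= 0 by lia.
      have := mulr_ge0 (_ : 0 <= a - 1) (ltW c1_gt0).
      have := mulr_ge0 (_ : 0 <= - b) (ltW r31_gt0).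
      move: hh; unfold_rel; lia.
    have := gain_lt0_of_rel1_le0 (_ : 0 <= a - 1) hb (_ : rel1 (a - 1) b <= 0).
    move: hh hp'; unfold_rel; lia.
  move: hv hv1 hp'; unfold_rel; lia.
exists 0, (-1).
have hy3 : c3 <= y3.
  rewrite leNgt; apply/negP => hh.
  have ha' : a < 0.
    have [//|ha0] : a < 0 \/ a = 0 by lia.
    have hb : 0 <= b.
      have [//|hb] : 0 <= b \/ b + 1 <= 0 by lia.
      have := mulr_ge0 (_ : 0 <= - (b + 1)) (ltW c3_gt0).
      move: hv hh; unfold_rel; subst a; lia.
    have := mulr_ge0 hb (ltW q_gt0).
    move: hq'; unfold_rel; subst a; lia.
  have := gain_lt0_of_rel3_ge0 ha' (_ : 0 <= rel3 a (b + 1)).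
  move: hv hh hq'; unfold_rel; lia.
move: hv hy3 hq'; unfold_rel; lia.
Qed.

Lemma reduce_rel2 {y1 y2 y3 a b} : 0 <= y1 -> 0 <= y2 -> 0 <= y3 ->
  feasible y1 y2 y3 a b ->
  exists y1' y2' y3' a' b', 0 <= y1' /\ 0 <= y2' /\ 0 <= y3' /\ feasible y1' y2' y3' a' b' /\
    y1' * n1 + y2' * n2 + y3' * n3 = y1 * n1 + y2 * n2 + y3 * n3 /\
    y1' + y2' + y3' = y1 + y2 + y3 /\ gain a' b' = gain a b /\
    - beta < rel2 a' b' /\ rel2 a' b' < beta.
Proof.
move=> h1 h2 h3 hv.
have [N hN] : exists N : nat, - N%:Z <= rel2 a b <= N%:Z by exists (absz (rel2 a b)); lia.
have hb := beta_gt0; have ha := alpha_gt0; have hc := gamma_gt0.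
have D := rel_dot q p; have L := rel_length q p.
have ph : gain q p = 0 by rewrite /gain; lia.
rewrite ph mulr0 in L.
have eA1 : rel1 q p = alpha by rewrite /rel1 /alpha.
have eA2 : rel2 q p = - beta by rewrite /rel2 /beta; lia.
have eA3 : rel3 q p = gamma by rewrite /rel3 /gamma; lia.
rewrite eA1 eA2 eA3 in D L.
elim: N y1 y2 y3 a b h1 h2 h3 hv hN => [|N IH] y1 y2 y3 a b h1 h2 h3 hv hN.
  exists y1, y2, y3, a, b; move: hv hN hb; unfold_rel; lia.
have [hh|hh] : (- beta < rel2 a b /\ rel2 a b < beta) \/
    ~ (- beta < rel2 a b /\ rel2 a b < beta) by lia.
  exists y1, y2, y3, a, b; move: hv hh; unfold_rel; lia.
have [hl|hl] : rel2 a b <= - beta \/ beta <= rel2 a b by lia.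
  have [y1' [y2' [y3' [a' [b' H]]]]] :=
    IH (y1 + alpha) (y2 - beta) (y3 + gamma) (a - q) (b - p) (ltac:(lia))
      (ltac:(move: hv hl; unfold_rel; lia)) (ltac:(lia)) (ltac:(move: hv; unfold_rel; lia))
      (ltac:(move: hN hl; unfold_rel; lia)).
  exists y1', y2', y3', a', b'.
  move: H D L; unfold_rel; lia.
have [y1' [y2' [y3' [a' [b' H]]]]] :=
  IH y1 y2 y3 (a + q) (b + p) h1 h2 h3 (ltac:(move: hv hl; unfold_rel; lia))
    (ltac:(move: hN hl; unfold_rel; lia)).
exists y1', y2', y3', a', b'.
move: H; unfold_rel; lia.
Qed.

Lemma shift_rel2_below_beta {y1 y2 y3 a b} : feasible y1 y2 y3 a b ->
  exists a' b', feasible y1 y2 y3 a' b' /\ gain a' b' = gain a b /\ y2 + rel2 a' b' < beta.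
Proof.
move=> hv.
have [N hN] : exists N : nat, y2 + rel2 a b <= N%:Z by exists (absz (y2 + rel2 a b)); lia.
have hb := beta_gt0; have ha := alpha_gt0; have hc := gamma_gt0.
elim: N a b hv hN => [|N IH] a b hv hN.
  by exists a, b; move: hv hN hb; unfold_rel; lia.
have [hh|hh] : y2 + rel2 a b < beta \/ beta <= y2 + rel2 a b by lia.
  by exists a, b; move: hv hh; unfold_rel; lia.
have [a' [b' H]] := IH (a + q) (b + p) (ltac:(move: hv hh; unfold_rel; lia))
  (ltac:(move: hN hh; unfold_rel; lia)).
exists a', b'; move: H; unfold_rel; lia.
Qed.

Lemma small_gain_shape a b : 1 <= gain a b -> (gain a b <= p \/ gain a b <= q) ->
  - beta < rel2 a b -> rel2 a b < beta ->
  (a <= 0 /\ - p <= b /\ b <= -1) \/ (1 <= a /\ a <= q /\ 0 <= b /\ b <= p - 1).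
Proof.
move=> h1 h2 h3 h4.
have [hb|hb] : p <= b \/ b < p by lia.
  have ha : q + 1 <= a.
    rewrite leNgt; apply/negP => hh.
    have := mulr_ge0 (_ : 0 <= q - a) (ltW p_gt0).
    have := mulr_ge0 (_ : 0 <= b - p) (ltW q_gt0).
    move: h1; unfold_rel; lia.
  have := mulr_ge0 (_ : 0 <= a - q - 1) (ltW r12_gt0).
  have := mulr_ge0 (_ : 0 <= b - p) (ltW r32_gt0).
  move: h3; unfold_rel; lia.
have [hb'|hb'] : b <= - p - 1 \/ - p <= b by lia.
  have ha : a <= - q.
    rewrite leNgt; apply/negP => hh.
    have := mulr_ge0 (_ : 0 <= a - 1 + q) (ltW p_gt0).
    have := mulr_ge0 (_ : 0 <= - p - 1 - b) (ltW q_gt0).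
    move: h1 h2; unfold_rel; lia.
  have := mulr_ge0 (_ : 0 <= - q - a) (ltW r12_gt0).
  have := mulr_ge0 (_ : 0 <= - p - 1 - b) (ltW r32_gt0).
  move: h4; unfold_rel; lia.
have [hb2|hb2] : b <= -1 \/ 0 <= b by lia.
  left.
  have ha : a <= 0.
    rewrite leNgt; apply/negP => hh.
    have := mulr_ge0 (_ : 0 <= a - 1) (ltW p_gt0).
    have := mulr_ge0 (_ : 0 <= - 1 - b) (ltW q_gt0).
    move: h1 h2; unfold_rel; lia.
  lia.
right.
have ha : 1 <= a.
  rewrite leNgt; apply/negP => hh.
  have := mulr_ge0 (_ : 0 <= - a) (ltW p_gt0).
  have := mulr_ge0 hb2 (ltW q_gt0).
  move: h1; unfold_rel; lia.
have ha' : a <= q.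
  rewrite leNgt; apply/negP => hh.
  have := mulr_ge0 (_ : 0 <= a - q - 1) (ltW p_gt0).
  have := mulr_ge0 (_ : 0 <= p - 1 - b) (ltW q_gt0).
  move: h1 h2; unfold_rel; lia.
lia.
Qed.

Lemma feasible_split_lam {y1 y2 y3 aj bj ak bk} : 0 <= y1 -> 0 <= y2 -> 0 <= y3 ->
  feasible y1 y2 y3 (aj + ak) (bj + bk) -> aj <= 0 -> bj <= -1 -> ak <= 0 -> bk <= -1 ->
  0 < gain aj bj -> 0 < gain ak bk -> feasible y1 y2 y3 aj bj \/ feasible y1 y2 y3 ak bk.
Proof.
move=> h1 h2 h3 hv haj hbj hak hbk hpj hpk.
have A3neg : forall a b, a <= 0 -> b <= -1 -> 0 < gain a b -> rel3 a b <= 0.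
  move=> a b ha hb hph; rewrite leNgt; apply/negP => hh.
  have ha' : a < 0.
    have [//|ha0] : a < 0 \/ a = 0 by lia.
    have := mulr_ge0 (_ : 0 <= - 1 - b) (ltW c3_gt0).
    move: hh; unfold_rel; subst a; lia.
  have := gain_lt0_of_rel3_ge0 ha' (_ : 0 <= rel3 a b).
  move: hh hph; unfold_rel; lia.
have := A3neg _ _ haj hbj hpj; have := A3neg _ _ hak hbk hpk.
have := mulr_ge0 (_ : 0 <= - aj) (ltW r12_gt0); have := mulr_ge0 (_ : 0 <= - ak) (ltW r12_gt0).
have := mulr_ge0 (_ : 0 <= - bj) (ltW r32_gt0); have := mulr_ge0 (_ : 0 <= - bk) (ltW r32_gt0).
move: hv; unfold_rel; lia.
Qed.

Lemma feasible_split_mu {y1 y2 y3 aj bj ak bk} : 0 <= y1 -> 0 <= y2 -> 0 <= y3 ->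
  feasible y1 y2 y3 (aj + ak) (bj + bk) -> 1 <= aj -> 0 <= bj -> 1 <= ak -> 0 <= bk ->
  0 < gain aj bj -> 0 < gain ak bk -> feasible y1 y2 y3 aj bj \/ feasible y1 y2 y3 ak bk.
Proof.
move=> h1 h2 h3 hv haj hbj hak hbk hpj hpk.
have A1pos : forall a b, 1 <= a -> 0 <= b -> 0 < gain a b -> 0 <= rel1 a b.
  move=> a b ha hb hph; rewrite leNgt; apply/negP => hh.
  have hb' : 0 < b.
    have [//|hb0] : 0 < b \/ b = 0 by lia.
    have := mulr_gt0 (_ : 0 < a) c1_gt0.
    move: hh; unfold_rel; subst b; lia.
  have := gain_lt0_of_rel1_le0 (_ : 0 <= a) hb' (_ : rel1 a b <= 0).
  move: hh hph; unfold_rel; lia.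
have := A1pos _ _ haj hbj hpj; have := A1pos _ _ hak hbk hpk.
have := mulr_ge0 (_ : 0 <= aj) (ltW r12_gt0); have := mulr_ge0 (_ : 0 <= ak) (ltW r12_gt0).
have := mulr_ge0 hbj (ltW r32_gt0); have := mulr_ge0 hbk (ltW r32_gt0).
have := mulr_ge0 hbj (ltW c3_gt0); have := mulr_ge0 hbk (ltW c3_gt0).
have := mulr_ge0 (_ : 0 <= aj) (ltW r13_gt0); have := mulr_ge0 (_ : 0 <= ak) (ltW r13_gt0).
move: hv; unfold_rel; lia.
Qed.

Lemma in_rangeE j : in_range p q j <-> 1 <= j /\ (j <= p \/ j <= q).
Proof.
rewrite /in_range le_max; split.
  by case=> h1 /orP h2.
by case=> h1 h2; split => //; apply/orP.
Qed.

Definition length_gap (y1 y2 y3 m : int) : Prop :=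
  forall w1 w2 w3, 0 <= w1 -> 0 <= w2 -> 0 <= w3 ->
  w1 * n1 + w2 * n2 + w3 * n3 = y1 * n1 + y2 * n2 + y3 * n3 ->
  y1 + y2 + y3 < w1 + w2 + w3 -> w1 + w2 + w3 < y1 + y2 + y3 + m -> False.

Definition no_smaller_gain (y1 y2 y3 i : int) : Prop :=
  forall a b, feasible y1 y2 y3 a b -> 0 < gain a b -> gain a b < i -> False.

Lemma length_gapP {y1 y2 y3 i} :
  length_gap y1 y2 y3 (g * i) <-> no_smaller_gain y1 y2 y3 i.
Proof.
split=> [gap a b [v1 [v2 v3]] gain_gt0 gain_lt | nogain].
  have := mulr_gt0 g_gt0 gain_gt0; have := mulr_gt0 g_gt0 (_ : 0 < i - gain a b).
  have := shift_dot y1 y2 y3 a b; have := shift_length y1 y2 y3 a b.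
  by move=> E1 E2 P1 P2; apply: (gap _ _ _ v1 v2 v3); lia.
move=> w1 w2 w3 hw1 hw2 hw3 hd hs1 hs2.
have [a [b [e1 e2 e3]]] := relation_lattice (w1 - y1) (w2 - y2) (w3 - y3) (ltac:(lia)).
have S := shift_length y1 y2 y3 a b.
apply: (nogain a b); first by rewrite /feasible; lia.
  by rewrite -(ltr_pM2l g_gt0) mulr0; lia.
by rewrite -(ltr_pM2l g_gt0); lia.
Qed.

Definition splits (cpl : int -> int -> int -> int -> int -> Prop) (x y : int) : Prop :=
  exists j k xj yj xk yk, in_range p q j /\ in_range p q k /\
    cpl p q j xj yj /\ cpl p q k xk yk /\ x = xj + xk /\ y = yj + yk.

Lemma lam_shape_irreducible {y1 y2 y3 a b} : 0 <= y1 -> 0 <= y2 -> 0 <= y3 ->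
  feasible y1 y2 y3 a b -> no_smaller_gain y1 y2 y3 (gain a b) ->
  - p <= b -> b <= -1 -> irreducible_couple lam_couple p q (gain a b).
Proof.
move=> h1 h2 h3 hv nog hb1 hb2.
exists a, (- b); split; first by rewrite /lam_couple /gain; lia.
move=> [j [k [xj [yj [xk [yk [/in_rangeE rj [/in_rangeE rk [cj [ck [ex ey]]]]]]]]]]].
move: cj ck; rewrite /lam_couple => cj ck.
have hxj : xj <= 0.
  rewrite leNgt; apply/negP => hh.
  have := mulr_ge0 (_ : 0 <= xj - 1) (ltW p_gt0).
  have := mulr_ge0 (_ : 0 <= yj - 1) (ltW q_gt0); lia.
have hxk : xk <= 0.
  rewrite leNgt; apply/negP => hh.
  have := mulr_ge0 (_ : 0 <= xk - 1) (ltW p_gt0).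
  have := mulr_ge0 (_ : 0 <= yk - 1) (ltW q_gt0); lia.
have eb : b = - yj + - yk by lia.
have hpj : gain xj (- yj) = j by rewrite /gain; lia.
have hpk : gain xk (- yk) = k by rewrite /gain; lia.
have hjk : gain a b = j + k by rewrite /gain ex eb; lia.
rewrite ex eb in hv.
have [hh|hh] := feasible_split_lam h1 h2 h3 hv hxj (ltac:(lia)) hxk (ltac:(lia))
  (ltac:(lia)) (ltac:(lia)).
  by apply: (nog _ _ hh); lia.
by apply: (nog _ _ hh); lia.
Qed.

Lemma mu_shape_irreducible {y1 y2 y3 a b} : 0 <= y1 -> 0 <= y2 -> 0 <= y3 ->
  feasible y1 y2 y3 a b -> no_smaller_gain y1 y2 y3 (gain a b) ->
  1 <= a -> a <= q -> irreducible_couple mu_couple p q (gain a b).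
Proof.
move=> h1 h2 h3 hv nog ha1 ha2.
exists a, (- b); split; first by rewrite /mu_couple /gain; lia.
move=> [j [k [xj [yj [xk [yk [/in_rangeE rj [/in_rangeE rk [cj [ck [ex ey]]]]]]]]]]].
move: cj ck; rewrite /mu_couple => cj ck.
have hyj : yj <= 0.
  rewrite leNgt; apply/negP => hh.
  have := mulr_ge0 (_ : 0 <= xj - 1) (ltW p_gt0).
  have := mulr_ge0 (_ : 0 <= yj - 1) (ltW q_gt0); lia.
have hyk : yk <= 0.
  rewrite leNgt; apply/negP => hh.
  have := mulr_ge0 (_ : 0 <= xk - 1) (ltW p_gt0).
  have := mulr_ge0 (_ : 0 <= yk - 1) (ltW q_gt0); lia.
have eb : b = - yj + - yk by lia.
have hpj : gain xj (- yj) = j by rewrite /gain; lia.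
have hpk : gain xk (- yk) = k by rewrite /gain; lia.
have hjk : gain a b = j + k by rewrite /gain ex eb; lia.
rewrite ex eb in hv.
have [hh|hh] := feasible_split_mu h1 h2 h3 hv (ltac:(lia)) (ltac:(lia)) (ltac:(lia))
  (ltac:(lia)) (ltac:(lia)) (ltac:(lia)).
  by apply: (nog _ _ hh); lia.
by apply: (nog _ _ hh); lia.
Qed.

Lemma length_gap_couple {y1 y2 y3 a b} : 0 <= y1 -> 0 <= y2 -> 0 <= y3 ->
  feasible y1 y2 y3 a b -> 0 < gain a b -> length_gap y1 y2 y3 (g * gain a b) ->
  in_range p q (gain a b) /\
  (irreducible_couple lam_couple p q (gain a b) \/ irreducible_couple mu_couple p q (gain a b)).
Proof.
move=> h1 h2 h3 hv hph gap.
have nog := length_gapP.1 gap.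
have hrange : gain a b <= p \/ gain a b <= q.
  have [//|[hp' hq']] : (gain a b <= p \/ gain a b <= q) \/ (p < gain a b /\ q < gain a b).
    by lia.
  have [a' [b' [hv' [hp1 hp2]]]] := gain_descent h1 h2 h3 hv hp' hq'.
  by case: (nog a' b').
split; first by apply/in_rangeE; lia.
have [y1' [y2' [y3' [a' [b' [k1 [k2 [k3 [hv' [hd [hs [hph' [hA1 hA2]]]]]]]]]]]]] :=
  reduce_rel2 h1 h2 h3 hv.
have nog' : no_smaller_gain y1' y2' y3' (gain a b).
  apply/length_gapP => w1 w2 w3 hw1 hw2 hw3 hdw hs1 hs2.
  by apply: (gap w1 w2 w3) => //; lia.
rewrite -hph' in nog' *.
have [[_ [hb1 hb2]]|[ha1 [ha2 _]]] := small_gain_shape a' b' (ltac:(lia)) (ltac:(lia)) hA1 hA2.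
  by left; exact: (lam_shape_irreducible k1 k2 k3 hv' nog' hb1 hb2).
by right; exact: (mu_shape_irreducible k1 k2 k3 hv' nog' ha1 ha2).
Qed.

Lemma lam_irreducible_shape {i x y} : in_range p q i -> lam_couple p q i x y ->
  ~ splits lam_couple x y -> i <= q /\ 1 - q <= x /\ x <= 0.
Proof.
move=> /in_rangeE [hi1 hi2] [Ei [hy1 hy2]] Irr.
have hiq : i <= q.
  rewrite leNgt; apply/negP => hqi.
  have hy : 2 <= y.
    have [//|hy] : 2 <= y \/ y = 1 by lia.
    have hx : 1 <= x.
      rewrite leNgt; apply/negP => hx.
      by have := mulr_ge0 (_ : 0 <= - x) (ltW p_gt0); subst y; lia.
    by have := mulr_ge0 (_ : 0 <= x - 1) (ltW p_gt0); subst y; lia.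
  apply: Irr; exists q, (i - q), 0, 1, x, (y - 1).
  by rewrite !in_rangeE /lam_couple; lia.
split=> //; split.
  rewrite leNgt; apply/negP => hx2.
  have := mulr_ge0 (_ : 0 <= - q - x) (ltW p_gt0).
  have := mulr_ge0 (_ : 0 <= p - y) (ltW q_gt0); lia.
rewrite leNgt; apply/negP => hx.
have := mulr_ge0 (_ : 0 <= x - 1) (ltW p_gt0).
have := mulr_ge0 (_ : 0 <= y - 1) (ltW q_gt0); lia.
Qed.

Lemma mu_irreducible_shape {i x y} : in_range p q i -> mu_couple p q i x y ->
  ~ splits mu_couple x y -> i <= p /\ 1 - p <= y /\ y <= 0.
Proof.
move=> /in_rangeE [hi1 hi2] [Ei [hx1 hx2]] Irr.
have hip : i <= p.
  rewrite leNgt; apply/negP => hpi.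
  have hx : 2 <= x.
    have [//|hx] : 2 <= x \/ x = 1 by lia.
    have hy : 1 <= y.
      rewrite leNgt; apply/negP => hy.
      by have := mulr_ge0 (_ : 0 <= - y) (ltW q_gt0); subst x; lia.
    by have := mulr_ge0 (_ : 0 <= y - 1) (ltW q_gt0); subst x; lia.
  apply: Irr; exists p, (i - p), 1, 0, (x - 1), y.
  by rewrite !in_rangeE /mu_couple; lia.
split=> //; split.
  rewrite leNgt; apply/negP => hy2.
  have := mulr_ge0 (_ : 0 <= q - x) (ltW p_gt0).
  have := mulr_ge0 (_ : 0 <= - p - y) (ltW q_gt0); lia.
rewrite leNgt; apply/negP => hy.
have := mulr_ge0 (_ : 0 <= x - 1) (ltW p_gt0).
have := mulr_ge0 (_ : 0 <= y - 1) (ltW q_gt0); lia.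
Qed.

Definition neg_part (t : int) : int := if t < 0 then - t else 0.

Lemma neg_partP t : 0 <= neg_part t /\ 0 <= neg_part t + t /\
  (neg_part t = 0 \/ neg_part t + t = 0).
Proof. by rewrite /neg_part; case: ifP; lia. Qed.

Lemma lam_residue_not_mu {i x y aw bw} :
  x * p + y * q = i -> i <= q -> x <= 0 -> 0 < rel2 x (- y) ->
  0 <= neg_part (rel1 x (- y)) + rel1 aw bw -> 0 <= neg_part (rel3 x (- y)) + rel3 aw bw ->
  1 <= x - aw -> 0 <= - y - bw -> 0 < gain (x - aw) (- y - bw) -> False.
Proof.
move=> Ei hiq hx hA2z hv1 hv3 hau hbu hgu.
have [h11 [h12 h13]] := neg_partP (rel1 x (- y)).
have [h31 [h32 h33]] := neg_partP (rel3 x (- y)).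
have EA1 : rel1 (x - aw) (- y - bw) = rel1 x (- y) - rel1 aw bw by rewrite /rel1; lia.
have EA2 : rel2 (x - aw) (- y - bw) = rel2 x (- y) - rel2 aw bw by rewrite /rel2; lia.
have EA3 : rel3 (x - aw) (- y - bw) = rel3 x (- y) - rel3 aw bw by rewrite /rel3; lia.
move: hau hbu hgu EA1 EA2 EA3; set au := x - aw; set bu := - y - bw => hau hbu hgu EA1 EA2 EA3.
have [hz1|hz1] : rel1 x (- y) < 0 \/ 0 <= rel1 x (- y) by lia.
  have hA1u : rel1 au bu <= 0 by lia.
  have hbu' : 0 < bu.
    have [//|hb0] : 0 < bu \/ bu = 0 by lia.
    have := mulr_gt0 (_ : 0 < au) c1_gt0.
    by move: hA1u; rewrite hb0 /rel1; lia.
  by have := gain_lt0_of_rel1_le0 (_ : 0 <= au) hbu' hA1u; lia.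
have hz3 : rel3 x (- y) < 0.
  rewrite ltNge; apply/negP => hz3.
  have [_ hz _] := nonneg_relation_eq0 (rel_dot x (- y)) hz1 (ltW hA2z) hz3.
  lia.
have hA2u : rel2 au bu < 0.
  have := mulr_ge0 (_ : 0 <= au - 1) (ltW r12_gt0).
  have := mulr_ge0 hbu (ltW r32_gt0); rewrite /rel2; lia.
have hA1u : 0 < rel1 au bu.
  rewrite ltNge; apply/negP => hh.
  have D := rel_dot au bu.
  have [_ hz _] := nonneg_relation_eq0 (x := - rel1 au bu) (y := - rel2 au bu)
    (z := - rel3 au bu) (ltac:(lia)) (ltac:(lia)) (ltac:(lia)) (ltac:(lia)).
  lia.
have hc1u := c1_le_rel1 hA1u (ltW hA2u) (_ : rel3 au bu <= 0).
have Ei' := congr1 ( *%R r31) Ei; rewrite /= in Ei'.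
have := mulr_ge0 (_ : 0 <= x * c1 + y * r31 - c1) (ltW q_gt0).
have := mulr_ge0 (_ : 0 <= - x) (ltW alpha_gt0).
have := mulr_gt0 (_ : 0 < c1 - r31) q_gt0.
have := mulr_ge0 (_ : 0 <= q - i) (ltW r31_gt0).
move: hc1u (r31_lt_c1); unfold_rel; lia.
Qed.

Lemma mu_residue_not_lam {i x y aw bw} :
  x * p + y * q = i -> i <= p -> 0 < x ->
  0 <= rel1 aw bw -> 0 <= neg_part (rel3 x (- y)) + rel3 aw bw ->
  aw <= 0 -> bw <= -1 -> 0 < gain aw bw -> False.
Proof.
move=> Ei hip hx1 hA1w hv3 haw hbw hphw.
have [h31 [h32 h33]] := neg_partP (rel3 x (- y)).
have [hz3|hz3] : 0 <= rel3 x (- y) \/ rel3 x (- y) < 0 by lia.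
  have hA3w : 0 <= rel3 aw bw by lia.
  have haw' : aw < 0.
    have [//|ha0] : aw < 0 \/ aw = 0 by lia.
    have := mulr_ge0 (_ : 0 <= - 1 - bw) (ltW c3_gt0).
    by move: hA3w; rewrite /rel3 ha0; lia.
  by have := gain_lt0_of_rel3_ge0 haw' hA3w; lia.
have hA2w : 0 < rel2 aw bw.
  have := mulr_ge0 (_ : 0 <= - aw) (ltW r12_gt0).
  have := mulr_ge0 (_ : 0 <= - bw - 1) (ltW r32_gt0); rewrite /rel2; lia.
have hA3w : rel3 aw bw < 0.
  rewrite ltNge; apply/negP => hh.
  have [_ hz _] := nonneg_relation_eq0 (rel_dot aw bw) hA1w (ltW hA2w) hh.
  lia.
have hc3w := rel3_le_Nc3 hA3w hA1w (ltW hA2w).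
have Ei' := congr1 ( *%R c3) Ei; rewrite /= in Ei'.
have := mulr_ge0 (_ : 0 <= x * r13 - c3 + c3 * y) (ltW q_gt0).
have := mulr_ge0 (_ : 0 <= x - 1) (ltW gamma_gt0).
have := mulr_gt0 (_ : 0 < c3 - r13) q_gt0.
have := mulr_ge0 (_ : 0 <= p - i) (ltW c3_gt0).
move: hc3w (r13_lt_c3); unfold_rel; lia.
Qed.

Lemma lam_irreducible_no_smaller_gain {i x y} :
  in_range p q i -> lam_couple p q i x y -> ~ splits lam_couple x y ->
  no_smaller_gain (neg_part (rel1 x (- y))) (neg_part (rel2 x (- y)))
    (neg_part (rel3 x (- y))) i.
Proof.
move=> hi hc Irr a' b' hv hph1 hph2.
have [hiq [hx2 hx]] := lam_irreducible_shape hi hc Irr.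
move: hi hc => /in_rangeE [hi1 hi2] [Ei [hy1 hy2]].
have hb := beta_gt0.
have hA2z : 0 < rel2 x (- y) /\ rel2 x (- y) < beta.
  have := mulr_ge0 (_ : 0 <= - x) (ltW r12_gt0).
  have := mulr_gt0 hy1 r32_gt0.
  have := mulr_ge0 (_ : 0 <= x + q - 1) (ltW r12_gt0).
  have := mulr_ge0 (_ : 0 <= p - y) (ltW r32_gt0).
  unfold_rel; lia.
have [h21 [h22 h23]] := neg_partP (rel2 x (- y)).
have neg2_eq0 : neg_part (rel2 x (- y)) = 0 by lia.
have [aw [bw [hvw [hphw hA2w]]]] := shift_rel2_below_beta hv.
move: hvw hA2w; rewrite /feasible neg2_eq0 !add0r => -[hv1 [hA2w0 hv3]] hA2w.
have [[haw hbw]|[haw [_ [hbw _]]]] :=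
  small_gain_shape aw bw (ltac:(lia)) (ltac:(lia)) (ltac:(lia)) hA2w; last first.
  have := mulr_ge0 (_ : 0 <= aw - 1) (ltW r12_gt0).
  by have := mulr_ge0 hbw (ltW r32_gt0); move: hA2w0; rewrite /rel2; lia.
have Eu : gain (x - aw) (- y - bw) = i - gain aw bw by rewrite /gain; lia.
have [[hau hbu]|[hau [_ [hbu _]]]] := small_gain_shape (x - aw) (- y - bw)
  (ltac:(lia)) (ltac:(lia)) (ltac:(move: hA2z hA2w0 hA2w; unfold_rel; lia))
  (ltac:(move: hA2z hA2w0 hA2w; unfold_rel; lia)).
  apply: Irr; exists (gain aw bw), (i - gain aw bw), aw, (- bw), (x - aw), (y + bw).
  by rewrite !in_rangeE /lam_couple; move: hphw Eu hph1 hph2; rewrite /gain; lia.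
apply: (lam_residue_not_mu Ei hiq hx hA2z.1 hv1 hv3 hau hbu).
by move: Eu hphw hph2; rewrite /gain; lia.
Qed.

Lemma mu_irreducible_no_smaller_gain {i x y} :
  in_range p q i -> mu_couple p q i x y -> ~ splits mu_couple x y ->
  no_smaller_gain (neg_part (rel1 x (- y))) (neg_part (rel2 x (- y)))
    (neg_part (rel3 x (- y))) i.
Proof.
move=> hi hc Irr a' b' hv hph1 hph2.
have [hip [hy2 hy]] := mu_irreducible_shape hi hc Irr.
move: hi hc => /in_rangeE [hi1 hi2] [Ei [hx1 hx2]].
have hb := beta_gt0.
have hA2z : rel2 x (- y) < 0 /\ - beta < rel2 x (- y).
  have := mulr_ge0 (_ : 0 <= x - 1) (ltW r12_gt0).
  have := mulr_ge0 (_ : 0 <= - y) (ltW r32_gt0).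
  have := mulr_ge0 (_ : 0 <= q - x) (ltW r12_gt0).
  have := mulr_ge0 (_ : 0 <= y - 1 + p) (ltW r32_gt0).
  unfold_rel; lia.
have hA1z : 0 <= rel1 x (- y).
  rewrite leNgt; apply/negP => hh.
  have hb' : 0 < - y.
    have [//|hb0] : 0 < - y \/ y = 0 by lia.
    have := mulr_gt0 hx1 c1_gt0.
    by move: hh; rewrite hb0 /rel1; lia.
  by have := gain_lt0_of_rel1_le0 (ltW hx1) hb' (ltW hh); rewrite /gain; lia.
have [h11 [h12 h13]] := neg_partP (rel1 x (- y)).
have [h21 [h22 h23]] := neg_partP (rel2 x (- y)).
have neg1_eq0 : neg_part (rel1 x (- y)) = 0 by lia.
have [aw [bw [hvw [hphw hA2w]]]] := shift_rel2_below_beta hv.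
move: hvw; rewrite /feasible neg1_eq0 add0r => -[hA1w [hv2 hv3]].
have Eu : gain (x - aw) (- y - bw) = i - gain aw bw by rewrite /gain; lia.
have [[hau hbu]|[hau [hau2 _]]] := small_gain_shape (x - aw) (- y - bw)
  (ltac:(lia)) (ltac:(lia)) (ltac:(move: hA2z hv2 hA2w; unfold_rel; lia))
  (ltac:(move: hA2z hv2 hA2w; unfold_rel; lia)).
  have := mulr_ge0 (_ : 0 <= - (x - aw)) (ltW r12_gt0).
  have := mulr_ge0 (_ : 0 <= - (- y - bw) - 1) (ltW r32_gt0).
  by move: hA2z hv2; unfold_rel; lia.
have [[haw [_ hbw]]|[haw [haw2 _]]] := small_gain_shape aw bw (ltac:(lia)) (ltac:(lia))
  (ltac:(lia)) (ltac:(lia)).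
  apply: (mu_residue_not_lam Ei hip hx1 hA1w hv3 haw hbw).
  by move: hphw hph1; rewrite /gain; lia.
apply: Irr; exists (gain aw bw), (i - gain aw bw), aw, (- bw), (x - aw), (y + bw).
by rewrite !in_rangeE /mu_couple; move: hphw Eu hph1 hph2; rewrite /gain; lia.
Qed.

Lemma irreducible_couple_length_gap {i} : in_range p q i ->
  irreducible_couple lam_couple p q i \/ irreducible_couple mu_couple p q i ->
  exists y1 y2 y3 a b, 0 <= y1 /\ 0 <= y2 /\ 0 <= y3 /\ feasible y1 y2 y3 a b /\
    gain a b = i /\ length_gap y1 y2 y3 (g * i).
Proof.
move=> hi hirr.
have [x [y [Ei nog]]] : exists x y, x * p + y * q = i /\
    no_smaller_gain (neg_part (rel1 x (- y))) (neg_part (rel2 x (- y)))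
      (neg_part (rel3 x (- y))) i.
  case: hirr => [[x [y [hc Irr]]]|[x [y [hc Irr]]]]; exists x, y; split; try exact: hc.1.
    exact: lam_irreducible_no_smaller_gain hi hc Irr.
  exact: mu_irreducible_no_smaller_gain hi hc Irr.
have [h11 [h12 _]] := neg_partP (rel1 x (- y)).
have [h21 [h22 _]] := neg_partP (rel2 x (- y)).
have [h31 [h32 _]] := neg_partP (rel3 x (- y)).
exists (neg_part (rel1 x (- y))), (neg_part (rel2 x (- y))), (neg_part (rel3 x (- y))), x, (- y).
do 4 (split=> //); split; first by rewrite /gain; lia.
exact/length_gapP.
Qed.

Lemma in_Delta_S_couple (N1 N2 N3 d : nat) : n1 = N1%:Z -> n2 = N2%:Z -> n3 = N3%:Z ->
  in_Delta_S N1 N2 N3 d -> exists i : int, in_range p q i /\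
    (irreducible_couple lam_couple p q i \/ irreducible_couple mu_couple p q i) /\
    d%:Z = g * i.
Proof.
move=> E1 E2 E3 [s [m [m' [hm [hm' [hlt [-> hbt]]]]]]].
have [y1 [y2 [y3 [h1 h2 h3 ey sy]]]] := (is_lengthE _ _ _ _ _).1 hm.
have [z1 [z2 [z3 [k1 k2 k3 ez sz]]]] := (is_lengthE _ _ _ _ _).1 hm'.
rewrite -E1 -E2 -E3 in ey ez.
have [a [b [ea eb ec]]] := relation_lattice (z1 - y1) (z2 - y2) (z3 - y3) (ltac:(lia)).
have hv : feasible y1 y2 y3 a b by rewrite /feasible; lia.
have S := shift_length y1 y2 y3 a b.
have hph : 0 < gain a b by rewrite -(ltr_pM2l g_gt0) mulr0; lia.
have gap : length_gap y1 y2 y3 (g * gain a b).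
  move=> w1 w2 w3 hw1 hw2 hw3 hd hs1 hs2.
  apply: (hbt (absz (w1 + w2 + w3))); [lia | lia |].
  by apply/is_lengthE; exists w1, w2, w3; rewrite -E1 -E2 -E3; split; lia.
have [hr hirr] := length_gap_couple h1 h2 h3 hv hph gap.
by exists (gain a b); split => //; split => //; lia.
Qed.

Lemma couple_in_Delta_S (N1 N2 N3 d : nat) : n1 = N1%:Z -> n2 = N2%:Z -> n3 = N3%:Z ->
  (exists i : int, in_range p q i /\
    (irreducible_couple lam_couple p q i \/ irreducible_couple mu_couple p q i) /\
    d%:Z = g * i) ->
  in_Delta_S N1 N2 N3 d.
Proof.
move=> E1 E2 E3 [i [hi [hirr hd]]].
have [y1 [y2 [y3 [a [b [h1 [h2 [h3 [[v1 [v2 v3]] [Eg gap]]]]]]]]]] :=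
  irreducible_couple_length_gap hi hirr.
have gi : 0 < g * i by move: hi => /in_rangeE [hi1 _]; exact: mulr_gt0.
have := mulr_ge0 h1 (ltW n1_gt0); have := mulr_ge0 h2 (ltW n2_gt0).
have := mulr_ge0 h3 (ltW n3_gt0).
have := shift_dot y1 y2 y3 a b; have := shift_length y1 y2 y3 a b.
rewrite Eg => S D P3 P2 P1.
exists (absz (y1 * n1 + y2 * n2 + y3 * n3)), (absz (y1 + y2 + y3)),
  (absz (y1 + y2 + y3 + g * i)).
split; first by apply/is_lengthE; exists y1, y2, y3; rewrite -E1 -E2 -E3; split; lia.
split.
  apply/is_lengthE; exists (y1 + rel1 a b), (y2 + rel2 a b), (y3 + rel3 a b).
  by rewrite -E1 -E2 -E3; split; lia.
do 2 (split; first by lia).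
move=> t ht1 ht2 /is_lengthE [w1 [w2 [w3 [hw1 hw2 hw3 ew sw]]]].
by rewrite -E1 -E2 -E3 in ew; apply: (gap w1 w2 w3); lia.
Qed.

End Relations.

Theorem theorem2p15 (n1 n2 n3 : nat)
  (c1 r12 r13 c3 r31 r32 : nat) :
  (0 < n1)%N -> (n1 < n2)%N -> (n2 < n3)%N ->
  gcdn n1 (gcdn n2 n3) = 1%N ->
  min_gen n1 n2 n3 ->
  ~ symmetric3 n1 n2 n3 ->
  is_c n1 n2 n3 c1 -> (0 < r12)%N -> (0 < r13)%N ->
  (c1 * n1 = r12 * n2 + r13 * n3)%N ->
  is_c n3 n1 n2 c3 -> (0 < r31)%N -> (0 < r32)%N ->
  (c3 * n3 = r31 * n1 + r32 * n2)%N ->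
  let delta1 : int := c1%:Z - r12%:Z - r13%:Z in
  let delta3 : int := r31%:Z + r32%:Z - c3%:Z in
  let g : int := gcdz delta1 delta3 in
  let p : int := (delta1 %/ g)%Z in
  let q : int := (delta3 %/ g)%Z in
  forall d : nat,
    in_Delta_S n1 n2 n3 d <->
    exists i : int, in_range p q i /\
      (irreducible_couple lam_couple p q i \/ irreducible_couple mu_couple p q i) /\
      d%:Z = g * i.
Proof.
move=> hn1 hn12 hn23 _ _ _ c1P hr12 hr13 e1 c3P hr31 hr32 e3 delta1 delta3 g p q d.
have hd1 : (r12 + r13 < c1)%N by nia.
have hd3 : (c3 < r31 + r32)%N by nia.
have delta1_gt0 : 0 < delta1 by rewrite /delta1; lia.
have delta3_gt0 : 0 < delta3 by rewrite /delta3; lia.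
have [g_gt0 [p_gt0 Ep]] : 0 < g /\ 0 < p /\ p * g = delta1 := divz_gcdl_gt0 _ delta3 delta1_gt0.
have [_ [q_gt0 Eq]] : 0 < g /\ 0 < q /\ q * g = delta3.
  by rewrite /q /g gcdzC; exact: divz_gcdl_gt0.
split.
  apply: (@in_Delta_S_couple n1%:Z n2%:Z n3%:Z c1%:Z r12%:Z r13%:Z c3%:Z r31%:Z r32%:Z g p q);
    first [exact: (is_c_minz c1P) | exact: (is_c_minz c3P) | lia].
apply: (@couple_in_Delta_S n1%:Z n2%:Z n3%:Z c1%:Z r12%:Z r13%:Z c3%:Z r31%:Z r32%:Z g p q);
  first [exact: (is_c_minz c1P) | exact: (is_c_minz c3P) | lia].
Qed.
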